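(* Let $\alpha\in\mathbb{R}$ with $\alpha\neq 1$. Then for every $\beta\in\mathbb{R}$, the sequence $\{k^2+\alpha k+\beta\}_{k=0}^{\infty}$ is not a Legendre multiplier sequence.
   Context: The Legendre polynomials $\mathfrak{Le}_n(x)$ are defined by $\frac{1}{\sqrt{1-2xt+t^2}}=\sum_{k=0}^{\infty}\mathfrak{Le}_k(x)t^k$. A real sequence $\{\gamma_k\}_{k=0}^{\infty}$ is a Legendre multiplier sequence if, for every $n$ and all real $a_0,\dots,a_n$, the polynomial $\sum_{k=0}^n a_k\gamma_k\mathfrak{Le}_k(x)$ has only real zeros whenever $\sum_{k=0}^n a_k\mathfrak{Le}_k(x)$ has only real zeros. *)

From mathcomp Require Import all_boot all_algebra.
From mathcomp Require Import reals complex.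
Set Implicit Arguments. Unset Strict Implicit. Unset Printing Implicit Defensive.
Import GRing.Theory Num.Theory.
Local Open Scope ring_scope.

(* Legendre polynomials, given by the three-term recurrence that is equivalent
   to the generating function 1/sqrt(1-2xt+t^2) = sum_k Le_k(x) t^k:
   Le_0 = 1, Le_1 = x, (n+2) Le_{n+2} = (2n+3) x Le_{n+1} - (n+1) Le_n. *)
Fixpoint legendre_pair (R : realType) (n : nat) : {poly R} * {poly R} :=
  match n with
  | 0 => (1, 'X)
  | n'.+1 =>
      let (p, q) := legendre_pair R n' in
      (q, (n'.+2%:R)^-1 *: ((n'.*2.+3)%:R *: ('X * q) - (n'.+1)%:R *: p))
  end.

Definition legendre (R : realType) (n : nat) : {poly R} := (legendre_pair R n).1.

(* A real polynomial has only real zeros: every complex zero is real.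
   Convention: the zero polynomial is regarded as having only real zeros. *)
Definition only_real_zeros (R : realType) (p : {poly R}) : Prop :=
  p = 0 \/
  forall z : complex R, root (map_poly (fun c : R => (c%:C)%C) p) z -> Im z = 0.

Definition legendre_multiplier_sequence (R : realType) (g : nat -> R) : Prop :=
  forall (n : nat) (a : nat -> R),
    only_real_zeros (\sum_(k < n.+1) a k *: legendre R k) ->
    only_real_zeros (\sum_(k < n.+1) (a k * g k) *: legendre R k).

(* Apply the multiplier to x^n (n = 2, 4, 6), which has only real zeros. The
   image is an even polynomial Q(x^2); if the sign of Q at -oo differs from
   the sign of Q(0), then Q has a negative zero y and i sqrt(-y) is a non-real
   zero of Q(x^2). For g(k) = k^2 + alpha k + beta with alpha <> 1, one of
   n = 2, 4, 6 always produces such a sign change. *)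

From mathcomp Require Import all_boot all_algebra.
From mathcomp Require Import reals complex polyrcf.
From mathcomp Require Import ring lra.
Import order.Order.TTheory GRing.Theory Num.Theory.
Set Implicit Arguments. Unset Strict Implicit. Unset Printing Implicit Defensive.
Local Open Scope ring_scope.

Lemma poly_eq_from_horner (R : numDomainType) (p q : {poly R}) :
  (forall x, p.[x] = q.[x]) -> p = q.
Proof.
move=> pq; apply/eqP; rewrite -subr_eq0; apply: contraT => pq_neq0.
pose rs : seq R := [seq i%:R | i <- iota 0 (size (p - q))].
have rs_roots : all (root (p - q)) rs.
  by apply/allP => x _; rewrite /root hornerD hornerN pq subrr.
have rs_uniq : uniq rs.
  by rewrite map_inj_uniq ?iota_uniq // => i j /eqP; rewrite eqr_nat => /eqP.
by have := max_poly_roots pq_neq0 rs_roots rs_uniq; rewrite size_map size_iota ltnn.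
Qed.

Ltac horner_expand :=
  do ![ rewrite hornerZ | rewrite hornerD | rewrite hornerN | rewrite hornerM
      | rewrite hornerX | rewrite hornerXn | rewrite horner_cons | rewrite hornerC
      | rewrite horner_comp ].

Lemma sgp_minfty_Poly_sg0 (R : realDomainType) (s : seq R) :
  (-1) ^+ (size s).-1 * last 0 s * head 0 s < 0 ->
  sgp_minfty (Poly s) * Num.sg (Poly s).[0] = -1.
Proof.
case: s => [|c s] /=; first by rewrite mulr0 ltxx.
move=> s_neg; have s_last : last c s != 0.
  by apply: contraTneq s_neg => ->; rewrite mulr0 mul0r ltxx.
rewrite /sgp_minfty lead_coefE horner_coef0 (@PolyK _ 1 (c :: s)) //= -sgrM.
by rewrite -last_nth ltr0_sg.
Qed.

Section RealClosedField.
Variable R : rcfType.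

Lemma sgp_minfty_sg0_neg_root (Q : {poly R}) :
  sgp_minfty Q * Num.sg Q.[0] = -1 -> exists2 y, y < 0 & root Q y.
Proof.
move=> sgQ.
have Q_neq0 : Q != 0.
  by apply: contra_eq_neq sgQ => ->; rewrite horner0 sgr0 mulr0 eq_sym oppr_eq0 oner_eq0.
set b := cauchy_bound Q.
have sgQb : Num.sg Q.[- b] = sgp_minfty Q.
  by apply: (sgp_minftyP (le_cauchy_bound Q_neq0)); rewrite in_itv /= lexx.
have b_le0 : - b <= 0 by rewrite oppr_le0 cauchy_bound_ge0.
have Q_sign_change : Q.[- b] * Q.[0] < 0 by rewrite -sgr_lt0 sgrM sgQb sgQ ltrN10.
have [y /andP[_ y_neg] Qy] := poly_ivtoo b_le0 Q_sign_change.
by exists y.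
Qed.

Lemma root_comp_sqr_imaginary (Q : {poly R}) y : y < 0 -> root Q y ->
  exists2 z : R[i], root (map_poly (fun c : R => (c%:C)%C) (Q \Po 'X^2)) z & Im z != 0.
Proof.
move=> y_neg Qy; set t := Num.sqrt (- y).
have t_pos : 0 < t by rewrite sqrtr_gt0 oppr_gt0.
exists (t%:C * 'i)%C; last by rewrite -complexIm ImiRe fmorph_eq0 gt_eqF.
have sqr_z : ((t%:C * 'i) ^+ 2)%C = (y%:C)%C.
  by rewrite exprMn sqr_i mulrN1 -rmorphXn /= sqr_sqrtr ?oppr_ge0 ?ltW // -rmorphN opprK.
rewrite /root map_comp_poly map_polyXn horner_comp hornerXn sqr_z horner_map /=.
by rewrite (rootP Qy) rmorph0.
Qed.
End RealClosedField.

Section Legendre.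
Variable R : realType.

Definition legendre_explicit (n : nat) : {poly R} :=
  match n with
  | 0 => 1
  | 1 => 'X
  | 2 => 2^-1 *: Poly [:: -1; 0; 3]
  | 3 => 2^-1 *: Poly [:: 0; -3; 0; 5]
  | 4 => 8^-1 *: Poly [:: 3; 0; -30; 0; 35]
  | 5 => 8^-1 *: Poly [:: 0; 15; 0; -70; 0; 63]
  | 6 => 16^-1 *: Poly [:: -5; 0; 105; 0; -315; 0; 231]
  | _ => 0
  end.

Lemma legendre_pair_succ n p q : legendre_pair R n = (p, q) ->
  legendre_pair R n.+1 =
    (q, (n.+2%:R)^-1 *: ((n.*2.+3)%:R *: ('X * q) - (n.+1)%:R *: p)).
Proof. by move=> /= ->. Qed.

Lemma legendre_pair_explicit n : (n <= 5)%N ->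
  legendre_pair R n = (legendre_explicit n, legendre_explicit n.+1).
Proof.
elim: n => [|n IH] n_lt5; first reflexivity.
rewrite (legendre_pair_succ (IH (ltnW n_lt5))); congr pair.
move: n_lt5; clear IH; do 5?[case: n => [|n]]; move=> // _.
all: apply: poly_eq_from_horner => x; rewrite /=; horner_expand.
all: by rewrite ?doubleS ?double0; field.
Qed.

Lemma legendre_explicitE n : (n <= 6)%N -> legendre R n = legendre_explicit n.
Proof.
case: n => [|n] n_le6; first by rewrite /legendre legendre_pair_explicit.
by rewrite /legendre /= legendre_pair_explicit.
Qed.
End Legendre.

Section Criterion.
Variable R : realType.

Lemma only_real_zeros_Xn n : only_real_zeros ('X^n : {poly R}).
Proof.
right=> z; rewrite map_polyXn => /rootP; rewrite hornerXn => /eqP.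
by rewrite expf_eq0 => /andP[_ /eqP ->]; apply/Creal_ImP; apply: real0.
Qed.

Lemma comp_sqr_not_only_real_zeros (Q : {poly R}) :
  sgp_minfty Q * Num.sg Q.[0] = -1 -> ~ only_real_zeros (Q \Po 'X^2).
Proof.
move=> sgQ; have [y y_neg Qy] := sgp_minfty_sg0_neg_root sgQ.
have [z Qz Imz] := root_comp_sqr_imaginary y_neg Qy.
case=> [Q2_eq0 | real_roots]; last by rewrite (real_roots z Qz) eqxx in Imz.
have : (Q \Po 'X^2).[0] = 0 by rewrite Q2_eq0 horner0.
rewrite horner_comp hornerXn expr0n /= => Q0.
by move/eqP: sgQ; rewrite Q0 sgr0 mulr0 eq_sym oppr_eq0 oner_eq0.
Qed.

Lemma not_legendre_multiplier_of_Xn (g : nat -> R) n (a : nat -> R) (Q : {poly R}) :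
  \sum_(k < n.+1) a k *: legendre R k = 'X^n ->
  \sum_(k < n.+1) (a k * g k) *: legendre R k = Q \Po 'X^2 ->
  sgp_minfty Q * Num.sg Q.[0] = -1 ->
  ~ legendre_multiplier_sequence g.
Proof.
move=> a_Xn ag_Q sgQ g_lms; apply: (comp_sqr_not_only_real_zeros sgQ).
by rewrite -ag_Q; apply: g_lms; rewrite a_Xn; apply: only_real_zeros_Xn.
Qed.
End Criterion.

Section QuadraticSequence.
Variable R : realType.

Definition quad_seq (alpha beta : R) (k : nat) : R :=
  (k ^ 2)%:R + alpha * k%:R + beta.

Ltac legendre_sum_eq :=
  apply: poly_eq_from_horner => x;
  rewrite !big_ord_recr big_ord0 /= !legendre_explicitE //= /quad_seq /=;
  horner_expand; field.

(* In each lemma below, [a] lists the Legendre coefficients of x^n and [Q] is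
   the image of x^n under the multiplier, written in the variable x^2. *)

Lemma quad_seq_not_lms_X2 alpha beta : quad_seq alpha beta 2 * (2 + alpha) < 0 ->
  ~ legendre_multiplier_sequence (quad_seq alpha beta).
Proof.
move=> sg2.
apply: (@not_legendre_multiplier_of_Xn _ _ 2 (nth 0 [:: 3^-1; 0; 2 / 3])
          (Poly [:: - (4 + 2 * alpha) / 3; quad_seq alpha beta 2])).
- by legendre_sum_eq.
- by legendre_sum_eq.
- by apply: sgp_minfty_Poly_sg0 => /=; rewrite expr1; nra.
Qed.

Lemma quad_seq_not_lms_X4 alpha beta : quad_seq alpha beta 4 * (1 - alpha) < 0 ->
  ~ legendre_multiplier_sequence (quad_seq alpha beta).
Proof.
move=> sg4.
apply: (@not_legendre_multiplier_of_Xn _ _ 4 (nth 0 [:: 5^-1; 0; 4 / 7; 0; 8 / 35])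
          (Poly [:: 8 / 35 * (1 - alpha); - (72 + 12 * alpha) / 7;
                    quad_seq alpha beta 4])).
- by legendre_sum_eq.
- by legendre_sum_eq.
- by apply: sgp_minfty_Poly_sg0 => /=; rewrite expr2; nra.
Qed.

Lemma quad_seq_not_lms_X6 alpha beta : 0 < quad_seq alpha beta 6 * (1 - alpha) ->
  ~ legendre_multiplier_sequence (quad_seq alpha beta).
Proof.
move=> sg6.
apply: (@not_legendre_multiplier_of_Xn _ _ 6
          (nth 0 [:: 7^-1; 0; 10 / 21; 0; 24 / 77; 0; 16 / 231])
          (Poly [:: 32 / 231 * (1 - alpha); 40 / 77 * (1 - alpha);
                    - (300 + 30 * alpha) / 11; quad_seq alpha beta 6])).
- by legendre_sum_eq.
- by legendre_sum_eq.
- by apply: sgp_minfty_Poly_sg0 => /=; rewrite !exprS expr0; nra.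
Qed.
End QuadraticSequence.

Theorem proposition4p5 (R : realType) (alpha : R) :
  alpha != 1 ->
  forall beta : R,
    ~ legendre_multiplier_sequence (fun k : nat => (k ^ 2)%:R + alpha * k%:R + beta).
Proof.
move=> alpha_neq1 beta; change (~ legendre_multiplier_sequence (quad_seq alpha beta)).
have q2 : quad_seq alpha beta 2 = 4 + 2 * alpha + beta by rewrite /quad_seq /=; ring.
have q4 : quad_seq alpha beta 4 = 16 + 4 * alpha + beta by rewrite /quad_seq /=; ring.
have q6 : quad_seq alpha beta 6 = 36 + 6 * alpha + beta by rewrite /quad_seq /=; ring.
have [alpha_lt1 | alpha_gt1 | alpha_eq1] := ltgtP alpha 1; last first.
- by rewrite alpha_eq1 eqxx in alpha_neq1.
- have [q4_pos | q4_le0] := ltP 0 (quad_seq alpha beta 4).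
    by apply: quad_seq_not_lms_X4; nra.
  by apply: quad_seq_not_lms_X2; nra.
have [q6_pos | q6_le0] := ltP 0 (quad_seq alpha beta 6).
  by apply: quad_seq_not_lms_X6; nra.
have [q4_neg | q4_ge0] := ltP (quad_seq alpha beta 4) 0.
  by apply: quad_seq_not_lms_X4; nra.
by apply: quad_seq_not_lms_X2; nra.
Qed.
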